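(* Let $R$ be an execution of the algorithm described in the context that starts from a well-initialized system state and includes a complete invocation of binary consensus. Suppose there is a system state $c\in R$ in which $\mathsf{result}_i()=v\in\{0,1\}$ for a correct processor $p_i$. Then there is a correct processor $p_j$ and a step of $R$ between $R$'s starting state and $c$ in which $p_j$ invokes $\mathsf{propose}_j(v)$.
   Context: System model. There are $n$ processors $p_1,\dots,p_n$ with unique identifiers, at most $t$ of which are Byzantine, where $n\ge 3t+1$; $\mathit{Correct}$ denotes the set of indices of non-faulty processors. A Byzantine processor computes its state according to the algorithm, but an adversary may arbitrarily modify, delay or remove the messages it sends. Processors cannot impersonate others, and messages between correct processors are private and cannot be altered. The system is asynchronous message passing. Every pair of processors is joined by a bidirectional channel of bounded capacity that may lose, duplicate and reorder packets, but a message sent infinitely often is received infinitely often. The scheduling of message arrivals does not depend on coin values. A common coin provides $\mathrm{randomBit}(r)$ for $r\in\mathbb{Z}^+$: all correct processors obtain the same bit $b_r$, with $\Pr(b_r=0)=\Pr(b_r=1)=1/2$, and the $b_r$ are independent. $M\in\mathbb{Z}^+$ is a fixed constant. The algorithm (code of $p_i$; $x_i$ denotes $p_i$'s copy of variable $x$). Local state: an integer $r\in\{0,\dots,M\}$; an array $est[0..M{+}1][1..n]$ whose entries are subsets of $\{0,1\}$; and an array $aux[0..M{+}1][1..n]$ whose entries lie in $\{0,1,\bot\}$. $\mathit{initState}$ means $r=0$, every $est$ entry equal to $\emptyset$, and every $aux$ entry equal to $\bot$. Let $\mathit{binValues}(r,x)=\{y\in\{0,1\}: |\{j: y\in est[r][j]\}|\ge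 x\}$. $\mathsf{infoResult}()$ is defined as follows: if there is a set $S$ of processors with $|S|\ge n-t$ and $aux[r][j]\in \mathit{binValues}(r,2t{+}1)$ for all $p_j\in S$, it returns $\{aux[r][j]:p_j\in S\}$ for such an $S$; otherwise it returns $\emptyset$. - $\mathsf{propose}(v)$, $v\in\{0,1\}$: set $(r,est,aux)\gets\mathit{initState}$, then $est[0][i]\gets\{v\}$. - $\mathsf{result}()$: if $est[M{+}1][i]$ is a singleton $\{v\}$, return $v$; else if $r\ge M$ and $\mathsf{infoResult}()\ne\emptyset$, return the error symbol $\boxtimes$; else return $\bot$. - $\mathsf{decide}(x)$: for every $r'\in\{r,\dots,M{+}1\}$ with $est[r'][i]=\emptyset$ or $aux[r'][i]=\bot$, set $est[r'][i]\gets\{x\}$ and $aux[r'][i]\gets x$. - $\mathsf{tryToDecide}(values)$: if $values$ is not a singleton, set $est[r][i]\gets\{\mathrm{randomBit}(r)\}$. Otherwise $values=\{v\}$: set $est[r][i]\gets\{v\}$, and if $v=\mathrm{randomBit}(r)$, call $\mathsf{decide}(v)$. - Do-forever loop. Each iteration does the following, provided $(r,est,aux)\ne\mathit{initState}$: (1) if $est[0][i]$ contains two values, replace it by $\{w\}$ for some $w\in est[0][i]$; (2) for every $r'\in\{1,\dots,r-1\}$ with $est[r'][i]=\emptyset$ or $aux[r'][i]=\bot$, set $est[r'][i]\gets est[0][i]$ and $aux[r'][i]\gets x$ for some $x\in est[0][i]$; (3) set $r\gets\min\{r+1,M\}$; (4) repeat { if some $w\in\mathit{binValues}(r,2t{+}1)$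 exists and ($aux[r][i]=\bot$ or $aux[r][i]\notin\mathit{binValues}(r,2t{+}1)$), set $aux[r][i]\gets w$; send $\mathrm{EST}(\mathsf{True},r,est[r{-}1][i]\cup\mathit{binValues}(r,t{+}1),aux[r][i])$ to every processor } until $\mathsf{infoResult}()\ne\emptyset$; (5) call $\mathsf{tryToDecide}(\mathsf{infoResult}())$. - Upon arrival of $\mathrm{EST}(a,\rho,V,u)$ from $p_j$: set $est[\rho][j]\gets est[\rho][j]\cup V$ and $aux[\rho][j]\gets u$; if $a=\mathsf{True}$, send $\mathrm{EST}(\mathsf{False},\rho,est[\rho{-}1][i],aux[r][i])$ to $p_j$. Definitions. - A system state is well-initialized if every correct processor has $(r_i,est_i,aux_i)=\mathit{initState}$ and no channel between two correct processors contains $\mathrm{EST}$ messages. - An execution includes a complete invocation of binary consensus if every correct processor invokes $\mathsf{propose}_i()$ exactly once in it. *)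

From mathcomp Require Import all_boot.
Set Implicit Arguments.
Unset Strict Implicit.
Unset Printing Implicit Defensive.

(*   n  : number of processors, t : bound on Byzantine processors,           *)
(*   M  : the fixed constant bounding the rounds,                            *)
(*   coin r : the common coin value randomBit(r) (same for all processors),  *)

(* A message EST(a, rho, V, u); u = None encodes the symbol bottom. *)
Definition msg := (bool * nat * {set bool} * option bool)%type.
Definition mkEST (a : bool) (rho : nat) (V : {set bool}) (u : option bool) : msg :=
  (a, rho, V, u).

(* Local state of a processor: round r, arrays est[0..M+1][1..n] and
   aux[0..M+1][1..n] (represented as functions on nat; only indices
   0..M+1 are meaningful), and a program counter: lpc = false means
   "at the start of a do-forever iteration", lpc = true means "inside the
   repeat-until loop (4)". *)
Record lstate (n : nat) := LS {
  lr   : nat;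
  lest : nat -> 'I_n -> {set bool};
  laux : nat -> 'I_n -> option bool;
  lpc  : bool }.

Definition isInit (n M : nat) (l : lstate n) : Prop :=
  lr l = 0 /\
  forall (k : nat) (j : 'I_n), k <= M.+1 -> lest l k j = set0 /\ laux l k j = None.

Definition binValues (n : nat) (l : lstate n) (r x : nat) : {set bool} :=
  [set y : bool | x <= #|[set j : 'I_n | y \in lest l r j]| ].

Definition infoOK (n t : nat) (l : lstate n) (S : {set 'I_n}) : bool :=
  (n - t <= #|S|) &&
  [forall j in S, if laux l (lr l) j is Some w
                  then w \in binValues l (lr l) (2 * t + 1) else false].

Definition infoVals (n : nat) (l : lstate n) (S : {set 'I_n}) : {set bool} :=
  [set w : bool | [exists j in S, laux l (lr l) j == Some w]].

(* infoResult() is nondeterministic (choice of S): relation "vals may be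
   returned by infoResult()". *)
Definition infoResult (n t : nat) (l : lstate n) (vals : {set bool}) : Prop :=
  (exists S : {set 'I_n}, infoOK t l S /\ vals = infoVals l S) \/
  ((forall S : {set 'I_n}, ~~ infoOK t l S) /\ vals = set0).

Definition infoNonEmpty (n t : nat) (l : lstate n) : bool :=
  [exists S : {set 'I_n}, infoOK t l S && (infoVals l S != set0)].

(* Outcome of result(): a value, the error symbol, or bottom. *)
Inductive outcome := OVal of bool | OErr | OBot.

Definition result (n t M : nat) (i : 'I_n) (l : lstate n) : outcome :=
  if [pick v : bool | lest l M.+1 i == [set v]] is Some v then OVal v
  else if (M <= lr l) && infoNonEmpty t l then OErr else OBot.

(* propose_i(v): (r, est, aux) <- initState; est[0][i] <- {v}.
   The invocation (re)starts the do-forever loop (pc reset). *)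
Definition propose (n : nat) (i : 'I_n) (v : bool) : lstate n :=
  LS 0 (fun k j => if (k == 0) && (j == i) then [set v] else set0)
       (fun _ _ => None) false.

Definition setEst (n : nat) (l : lstate n) (k : nat) (i : 'I_n) (V : {set bool}) :=
  LS (lr l) (fun k' j => if (k' == k) && (j == i) then V else lest l k' j)
     (laux l) (lpc l).

Definition setAux (n : nat) (l : lstate n) (k : nat) (i : 'I_n) (u : option bool) :=
  LS (lr l) (lest l) (fun k' j => if (k' == k) && (j == i) then u else laux l k' j)
     (lpc l).

Definition setPc (n : nat) (l : lstate n) (b : bool) :=
  LS (lr l) (lest l) (laux l) b.

Definition decideCond (n M : nat) (i : 'I_n) (l : lstate n) (k : nat) : bool :=
  (lr l <= k <= M.+1) && ((lest l k i == set0) || (laux l k i == None)).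

Definition decide (n M : nat) (i : 'I_n) (x : bool) (l : lstate n) : lstate n :=
  LS (lr l)
     (fun k j => if (j == i) && decideCond M i l k then [set x] else lest l k j)
     (fun k j => if (j == i) && decideCond M i l k then Some x else laux l k j)
     (lpc l).

Definition tryToDecide (n M : nat) (coin : nat -> bool) (i : 'I_n)
    (vals : {set bool}) (l : lstate n) : lstate n :=
  let b := coin (lr l) in
  if [pick v : bool | vals == [set v]] is Some v then
    let l1 := setEst l (lr l) i [set v] in
    if v == b then decide M i v l1 else l1
  else setEst l (lr l) i [set b].

(* Steps (1)-(3) of a do-forever iteration (guarded by (r,est,aux) <> initState).
   w0 resolves the choice in (1), f r' resolves the choice of x in (2). *)
Definition loopStart (n M : nat) (i : 'I_n) (l l' : lstate n) : Prop :=
  ~ isInit M l /\ lpc l = false /\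
  exists (w0 : bool) (f : nat -> bool),
    let e0 := if #|lest l 0 i| == 2 then [set w0] else lest l 0 i in
    let c2 := fun k => (1 <= k < lr l) && ((lest l k i == set0) || (laux l k i == None)) in
    (forall k, c2 k -> f k \in e0) /\
    l' = LS (minn (lr l).+1 M)
            (fun k j => if j == i then
                          (if k == 0 then e0 else if c2 k then e0 else lest l k j)
                        else lest l k j)
            (fun k j => if (j == i) && c2 k then Some (f k) else laux l k j)
            true.

(* The aux update at the beginning of the body of the repeat loop (4). *)
Definition auxUpdate (n t : nat) (i : 'I_n) (l l1 : lstate n) : Prop :=
  let r := lr l in
  let bv := binValues l r (2 * t + 1) in
  let c := (bv != set0) &&
           (if laux l r i is Some a then a \notin bv else true) in
  (c /\ exists w, w \in bv /\ l1 = setAux l r i (Some w)) \/ (~~ c /\ l1 = l).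

(* One execution of the body of the repeat loop (4), including the "until"
   test and, if the loop is left, step (5).  m is the message EST(True, ...)
   sent to every processor. *)
Definition repeatStep (n t M : nat) (coin : nat -> bool) (i : 'I_n)
    (l : lstate n) (m : msg) (l' : lstate n) : Prop :=
  ~ isInit M l /\ lpc l = true /\
  exists l1, auxUpdate t i l l1 /\
    m = mkEST true (lr l) (lest l (lr l).-1 i :|: binValues l (lr l) t.+1)
              (laux l1 (lr l) i) /\
    (if infoNonEmpty t l1 then
       exists vals, infoResult t l1 vals /\ l' = setPc (tryToDecide M coin i vals l1) false
     else l' = l1).

(* Upon arrival of EST(a, rho, V, u) from p_j at p_i: new local state and the
   (optional) reply.  Messages whose round index is outside 0..M+1 are
   discarded. *)
Definition receive (n M : nat) (i j : 'I_n) (m : msg) (l : lstate n)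
    : lstate n * option msg :=
  let: (a, rho, V, u) := m in
  if rho <= M.+1 then
    let l1 := setAux (setEst l rho j (lest l rho j :|: V)) rho j u in
    (l1, if a then Some (mkEST false rho (lest l1 rho.-1 i) (laux l1 (lr l1) i))
         else None)
  else (l, None).

(* gchan g j k : content of the channel from p_j to p_k.                     *)
Record gstate (n : nat) := GS {
  gloc  : 'I_n -> lstate n;
  gchan : 'I_n -> 'I_n -> seq msg }.

Definition updL (n : nat) (f : 'I_n -> lstate n) (i : 'I_n) (x : lstate n) :=
  fun k => if k == i then x else f k.

Definition updC (n : nat) (c : 'I_n -> 'I_n -> seq msg) (a b : 'I_n) (x : seq msg) :=
  fun k k' => if (k == a) && (k' == b) then x else c k k'.

(* Sending m on a bounded channel of capacity cap: the packet may be lost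
   (in particular, it is lost when the channel is full). *)
Definition sendOk (cap : nat) (ch ch' : seq msg) (m : msg) : Prop :=
  ch' = ch \/ (size ch < cap /\ ch' = rcons ch m).

Inductive action (n : nat) :=
  | APropose of 'I_n & bool
  | ALoop    of 'I_n             (* steps (1)-(3) of an iteration of p_i *)
  | ARepeat  of 'I_n             (* one round of the repeat loop (4) (+ (5)) *)
  | ARecv    of 'I_n & 'I_n      (* ARecv j i : p_i receives a packet from p_j *)
  | AFault   of 'I_n & 'I_n      (* channel j->k loses / duplicates / reorders *)
  | AInject  of 'I_n & 'I_n.     (* adversary rewrites channel j->k, j Byzantine *)

Definition step (n t M cap : nat) (coin : nat -> bool) (Correct : {set 'I_n})
    (g : gstate n) (a : action n) (g' : gstate n) : Prop :=
  match a with
  | APropose i v => g' = GS (updL (gloc g) i (propose i v)) (gchan g)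
  | ALoop i => exists l', loopStart M i (gloc g i) l' /\
                 g' = GS (updL (gloc g) i l') (gchan g)
  | ARepeat i => exists m l' (out : 'I_n -> seq msg),
                 repeatStep t M coin i (gloc g i) m l' /\
                 (forall k, sendOk cap (gchan g i k) (out k) m) /\
                 g' = GS (updL (gloc g) i l')
                         (fun k k' => if k == i then out k' else gchan g k k')
  | ARecv j i => exists m, m \in gchan g j i /\
                 let c1 := updC (gchan g) j i (rem m (gchan g j i)) in
                 let: (l', rep) := receive M i j m (gloc g i) in
                 match rep with
                 | None => g' = GS (updL (gloc g) i l') c1
                 | Some mr => exists ch', sendOk cap (c1 i j) ch' mr /\
                                g' = GS (updL (gloc g) i l') (updC c1 i j ch')
                 end
  | AFault j k => exists ch', {subset ch' <= gchan g j k} /\ size ch' <= cap /\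
                 g' = GS (gloc g) (updC (gchan g) j k ch')
  | AInject j k => j \notin Correct /\ exists ch', size ch' <= cap /\
                 g' = GS (gloc g) (updC (gchan g) j k ch')
  end.

Definition wellInitialized (n M : nat) (Correct : {set 'I_n}) (g : gstate n) : Prop :=
  (forall i, i \in Correct -> isInit M (gloc g i)) /\
  (forall i j, i \in Correct -> j \in Correct -> gchan g i j = [::]).

Definition isExecution (n t M cap : nat) (coin : nat -> bool) (Correct : {set 'I_n})
    (exec : nat -> gstate n) (acts : nat -> action n) : Prop :=
  forall m, step t M cap coin Correct (exec m) (acts m) (exec m.+1).

Definition completeInvocation (n : nat) (Correct : {set 'I_n}) (acts : nat -> action n) : Prop :=
  forall i, i \in Correct ->
    exists m v, acts m = APropose i v /\
      forall m' v', acts m' = APropose i v' -> m' = m.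

From mathcomp Require Import all_boot.
Set Implicit Arguments.
Unset Strict Implicit.
Unset Printing Implicit Defensive.

(* Let P be the set of values proposed by correct processors so far.  The
   est/aux entries that correct processors keep about correct processors, and
   the messages between correct processors, only carry values of P; every step
   preserves this.  A value of binValues(r, x) with x > t is held by some
   correct processor, as at most t processors are faulty; infoResult() only
   returns such values, and returns a nonempty set because n - t > 0; and the
   coin value is stored only when infoResult() returns both values.  Finally
   result() reads est[M+1][i]. *)

Lemma setT_bool_of_card_gt1 (A : {set bool}) : 1 < #|A| -> A = setT.
Proof. by move=> gt1A; apply/eqP; rewrite eqEcard subsetT cardsT card_bool. Qed.

Lemma exists_in_of_card_setC_lt (T : finType) (C A : {set T}) :
  #|~: C| < #|A| -> exists2 j, j \in C & j \in A.
Proof.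
move=> ltCA; have : ~~ (A \subset ~: C).
  by apply: contraL ltCA => /subset_leq_card; rewrite leqNgt.
by case/subsetPn => j jA; rewrite inE negbK => jC; exists j.
Qed.

Section Invariant.

Variables (n t M : nat) (Correct : {set 'I_n}) (P : {set bool}).
Hypothesis few_faulty : #|~: Correct| <= t.
Hypothesis t_lt_n : t < n.

Let t_lt_2t1 : t < 2 * t + 1.
Proof. by rewrite addn1 ltnS leq_pmull. Qed.

Definition opt_in (u : option bool) : bool := if u is Some v then v \in P else true.

Definition lstate_ok (l : lstate n) : Prop :=
  lr l <= M /\ forall k j, k <= M.+1 -> j \in Correct ->
    lest l k j \subset P /\ opt_in (laux l k j).

Definition msg_ok (m : msg) : bool := (m.1.2 \subset P) && opt_in m.2.

Lemma binValues_sub l r x :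
  lstate_ok l -> r <= M.+1 -> t < x -> binValues l r x \subset P.
Proof.
move=> [_ okl] leM ltx; apply/subsetP => v; rewrite inE => hv.
have [j jC] : exists2 j, j \in Correct & j \in [set j | v \in lest l r j].
  apply: exists_in_of_card_setC_lt.
  exact: leq_ltn_trans few_faulty (leq_trans ltx hv).
by rewrite inE; apply/subsetP; have [] := okl r j leM jC.
Qed.

Lemma lstate_ok_propose i v : v \in P -> lstate_ok (propose i v).
Proof.
by move=> vP; split=> // k j _ _; split=> //=; case: ifP; rewrite ?sub1set ?sub0set.
Qed.

Lemma lstate_ok_setEst l k i (V : {set bool}) :
  lstate_ok l -> (i \in Correct -> V \subset P) -> lstate_ok (setEst l k i V).
Proof.
move=> [leM okl] okV; split=> // k' j lek jC; have [okE okA] := okl k' j lek jC.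
by split=> //=; case: ifP => // /andP[_ /eqP ji]; apply: okV; rewrite -ji.
Qed.

Lemma lstate_ok_setAux l k i u :
  lstate_ok l -> (i \in Correct -> opt_in u) -> lstate_ok (setAux l k i u).
Proof.
move=> [leM okl] oku; split=> // k' j lek jC; have [okE okA] := okl k' j lek jC.
by split=> //=; case: ifP => // /andP[_ /eqP ji]; apply: oku; rewrite -ji.
Qed.

Lemma lstate_ok_decide i x l : x \in P -> lstate_ok l -> lstate_ok (decide M i x l).
Proof.
move=> xP [leM okl]; split=> // k j lek jC; have [okE okA] := okl k j lek jC.
by split=> /=; case: ifP; rewrite ?sub1set.
Qed.

Lemma lstate_ok_tryToDecide coin i (vals : {set bool}) l :
  vals != set0 -> vals \subset P -> lstate_ok l ->
  lstate_ok (tryToDecide M coin i vals l).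
Proof.
move=> vals_n0 valsP okl; rewrite /tryToDecide; case: pickP => [v /eqP vals1 | no1].
  have vP : v \in P by rewrite -sub1set -vals1.
  have okl1 : lstate_ok (setEst l (lr l) i [set v]).
    by apply: lstate_ok_setEst => // _; rewrite -vals1.
  by case: ifP => // _; apply: lstate_ok_decide.
have valsT : vals = setT.
  apply: setT_bool_of_card_gt1; rewrite ltn_neqAle card_gt0 vals_n0 andbT eq_sym.
  by apply/cards1P => -[v vals1]; have := no1 v; rewrite vals1 eqxx.
apply: lstate_ok_setEst => // _; rewrite sub1set; apply/(subsetP valsP).
by rewrite valsT inE.
Qed.

Lemma lstate_ok_loopStart i l l' :
  i \in Correct -> lstate_ok l -> loopStart M i l l' -> lstate_ok l'.
Proof.
move=> iC [leM okl] [_ [_ [w0 [f [fe0 ->]]]]].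
set e0 := if #|lest l 0 i| == 2 then [set w0] else lest l 0 i.
have e0P : e0 \subset P.
  apply: subset_trans (okl 0 i isT iC).1; rewrite /e0.
  case: ifP => [/eqP card2 | _] //.
  by rewrite (@setT_bool_of_card_gt1 (lest l 0 i)) ?card2 ?subsetT.
split=> [|k j lek jC]; first exact: geq_minr.
have [okE okA] := okl k j lek jC; split=> /=.
  by case: ifP => _ //; do 2!case: ifP => _ //.
by case: ifP => [/andP[_ c2k] | _] //=; apply/(subsetP e0P)/fe0.
Qed.

Lemma lstate_ok_auxUpdate i l l1 : lstate_ok l -> auxUpdate t i l l1 -> lstate_ok l1.
Proof.
move=> okl [[_ [w [wbv ->]]] | [_ ->]] //.
apply: lstate_ok_setAux => // _ /=; apply: (subsetP (binValues_sub okl _ _)) wbv => //.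
exact: leqW okl.1.
Qed.

Lemma infoResult_ok l vals :
  lstate_ok l -> infoNonEmpty t l -> infoResult t l vals ->
  vals != set0 /\ vals \subset P.
Proof.
move=> okl /existsP[S0 /andP[okS0 _]] [[S [okS ->]] | [noS _]]; last first.
  by have := noS S0; rewrite okS0.
case/andP: okS => cardS /forall_inP auxS; split.
  have [j jS] : exists j, j \in S.
    by apply/card_gt0P; apply: leq_trans cardS; rewrite subn_gt0.
  have := auxS j jS; case E: (laux l (lr l) j) => [w|] // _.
  by apply/set0Pn; exists w; rewrite inE; apply/exists_inP; exists j; rewrite ?E.
apply/subsetP => w; rewrite inE => /exists_inP[j jS /eqP auxj].
have := auxS j jS; rewrite auxj; apply/subsetP/binValues_sub => //.
exact: leqW okl.1.
Qed.

Lemma repeatStep_ok coin i l m l' :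
  i \in Correct -> lstate_ok l -> repeatStep t M coin i l m l' ->
  lstate_ok l' /\ msg_ok m.
Proof.
move=> iC okl [_ [_ [l1 [upd [-> next]]]]].
have okl1 := lstate_ok_auxUpdate okl upd.
have lrM : lr l <= M.+1 by exact: leqW okl.1.
split.
  move: next; case: ifP => [ne [vals [res ->]] | _ -> //].
  have [vals_n0 valsP] := infoResult_ok okl1 ne res.
  exact: lstate_ok_tryToDecide.
rewrite /msg_ok /= subUset (okl.2 _ i (leq_trans (leq_pred _) lrM) iC).1.
by rewrite binValues_sub //=; have [] := okl1.2 _ i lrM iC.
Qed.

Lemma receive_ok i j m l :
  i \in Correct -> lstate_ok l -> (j \in Correct -> msg_ok m) ->
  lstate_ok (receive M i j m l).1 /\
  forall mr, (receive M i j m l).2 = Some mr -> msg_ok mr.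
Proof.
case: m => [[[a rho] V] u] iC okl okm /=; case: ifP => [rhoM | _] //.
set l1 := setAux _ _ _ _.
have okl1 : lstate_ok l1.
  apply: lstate_ok_setAux; last by move=> /okm /andP[].
  apply: lstate_ok_setEst => // jC; rewrite subUset (okl.2 rho j rhoM jC).1.
  by case/andP: (okm jC).
split=> // mr; case: a {okm} => // -[<-]; rewrite /msg_ok /=.
have [lrM okE] := okl1.
by rewrite (okE _ i (leq_trans (leq_pred _) rhoM) iC).1 (okE _ i (leqW lrM) iC).2.
Qed.

Definition chans_ok (c : 'I_n -> 'I_n -> seq msg) : Prop :=
  forall a b, a \in Correct -> b \in Correct -> all msg_ok (c a b).

Definition gstate_ok (g : gstate n) : Prop :=
  (forall i, i \in Correct -> lstate_ok (gloc g i)) /\ chans_ok (gchan g).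

Lemma all_sendOk cap ch ch' m :
  sendOk cap ch ch' m -> msg_ok m -> all msg_ok ch -> all msg_ok ch'.
Proof. by case=> [-> | [_ ->]] okm okch //; rewrite all_rcons okm. Qed.

Lemma lstate_ok_updL (f : 'I_n -> lstate n) i l :
  (forall j, j \in Correct -> lstate_ok (f j)) -> (i \in Correct -> lstate_ok l) ->
  forall j, j \in Correct -> lstate_ok (updL f i l j).
Proof.
move=> okf okl j jC; rewrite /updL.
by case: eqP => [ji | _]; [apply: okl; rewrite -ji | apply: okf].
Qed.

Lemma chans_ok_updC c a b ch :
  chans_ok c -> (a \in Correct -> b \in Correct -> all msg_ok ch) ->
  chans_ok (updC c a b ch).
Proof.
move=> okc okch a' b' aC bC; rewrite /updC.
by case: ifP => [/andP[/eqP ea /eqP eb] | _]; [subst; apply: okch | apply: okc].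
Qed.

Lemma gstate_ok_wellInitialized g : wellInitialized M Correct g -> gstate_ok g.
Proof.
move=> [initl initc]; split=> [i iC | a b aC bC]; last by rewrite initc.
have [lr0 init0] := initl i iC; split=> [|k j lek _]; first by rewrite lr0.
by have [-> ->] := init0 k j lek; rewrite sub0set.
Qed.

Lemma gstate_ok_recv cap coin g j i g' :
  gstate_ok g -> step t M cap coin Correct g (ARecv j i) g' -> gstate_ok g'.
Proof.
move=> [okl okc] /= [m [mch]].
have okm : i \in Correct -> j \in Correct -> msg_ok m.
  by move=> iC jC; apply: (allP (okc j i jC iC)).
set c1 := updC _ _ _ _.
have okc1 : chans_ok c1.
  apply: chans_ok_updC => // jC iC; apply/allP => x /mem_rem.
  exact: (allP (okc j i jC iC)).
case E: (receive M i j m (gloc g i)) => [l' rep].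
have okl' : i \in Correct -> lstate_ok l'.
  by move=> iC; have := (receive_ok iC (okl i iC) (okm iC)).1; rewrite E.
case: rep E => [mr | ] E; last by move=> ->; split=> //; apply: lstate_ok_updL.
move=> [ch' [send ->]]; split; first exact: lstate_ok_updL.
apply: chans_ok_updC => // iC jC.
have := (receive_ok iC (okl i iC) (okm iC)).2 mr; rewrite E => /(_ erefl) okmr.
exact: all_sendOk send okmr (okc1 i j iC jC).
Qed.

Lemma gstate_ok_step cap coin g a g' :
  gstate_ok g -> step t M cap coin Correct g a g' ->
  (forall i v, a = APropose i v -> i \in Correct -> v \in P) -> gstate_ok g'.
Proof.
move=> okg; have [okl okc] := okg.
case: a => [i v | i | i | j i | j k | j k] /= stp okprop.
- rewrite stp; split=> //; apply: lstate_ok_updL => // iC.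
  exact/lstate_ok_propose/(okprop _ _ erefl iC).
- have [l' [start ->]] := stp; split=> //; apply: lstate_ok_updL => // iC.
  exact: lstate_ok_loopStart (okl i iC) start.
- have [m [l' [out [rep [send ->]]]]] := stp; split=> /=.
    by apply: lstate_ok_updL => // iC; have [] := repeatStep_ok iC (okl i iC) rep.
  move=> a b aC bC; case: eqP => [ai | _]; last exact: okc.
  subst a; have [_ okm] := repeatStep_ok aC (okl i aC) rep.
  exact: all_sendOk (send b) okm (okc i b aC bC).
- exact: gstate_ok_recv stp.
- have [ch' [sub [_ ->]]] := stp; split=> //; apply: chans_ok_updC => // jC kC.
  by apply/allP => m /sub; apply: (allP (okc j k jC kC)).
- have [jN [ch' [_ ->]]] := stp; split=> //; apply: chans_ok_updC => // jC.
  by rewrite jC in jN.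
Qed.

End Invariant.

Definition proposed_before n (Correct : {set 'I_n}) (acts : nat -> action n) k
    : {set bool} :=
  [set v | [exists m : 'I_k,
     if acts m is APropose j w then (j \in Correct) && (w == v) else false]].

Lemma proposed_beforeP n (Correct : {set 'I_n}) acts k v :
  reflect (exists j m, j \in Correct /\ m < k /\ acts m = APropose j v)
          (v \in proposed_before Correct acts k).
Proof.
apply: (iffP idP).
  rewrite inE => /existsP[[m ltmk]] /=.
  by case E: (acts m) => [j w|||||] //= /andP[jC /eqP <-]; exists j, m.
move=> [j [m [jC [ltmk E]]]]; rewrite inE; apply/existsP.
by exists (Ordinal ltmk); rewrite /= E jC eqxx.
Qed.

Theorem lemma7 (n t M cap : nat) (coin : nat -> bool) (Correct : {set 'I_n})
    (exec : nat -> gstate n) (acts : nat -> action n) :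
  3 * t + 1 <= n -> 0 < M -> #|~: Correct| <= t ->
  isExecution t M cap coin Correct exec acts ->
  wellInitialized M Correct (exec 0) ->
  completeInvocation Correct acts ->
  forall (k : nat) (i : 'I_n) (v : bool),
    i \in Correct ->
    result t M i (gloc (exec k) i) = OVal v ->
    exists (j : 'I_n) (m : nat), j \in Correct /\ m < k /\ acts m = APropose j v.
Proof.
move=> n_gt3t _ few_faulty exec_steps init _ k i v iC.
have t_lt_n : t < n by apply: leq_trans n_gt3t; rewrite addn1 ltnS leq_pmull.
set P := proposed_before Correct acts k.
have inv k' : k' <= k -> gstate_ok M Correct P (exec k').
  elim: k' => [_ | k' IH ltk]; first exact: gstate_ok_wellInitialized.
  apply: gstate_ok_step (IH (ltnW ltk)) (exec_steps k') _ => // j w act_k' jC.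
  by apply/proposed_beforeP; exists j, k'.
rewrite /result; case: pickP => [w /eqP estw [<-] | _]; last by case: ifP.
have [_ okl] := (inv k (leqnn k)).1 i iC.
apply/proposed_beforeP; rewrite -sub1set -estw.
by have [] := okl M.+1 i (leqnn _) iC.
Qed.
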